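(* Let $\mathsf V$ be a variety and $h:\mathbf F_{\mathsf V}(z)\to\prod_{k=1}^m\mathbf E_k$ an algebraic e-generalization problem. If $\prod_{k=1}^m\mathbf E_k$ is finitely generated and projective in $\mathsf V$, then the e-generalization type of $h$ is unitary and $h$ is the minimum of $(\mathscr A(h),\sqsubseteq)$.
   Context: $\mathbf F_{\mathsf V}(z)$ is the free algebra of the variety $\mathsf V$ on one generator $z$. An algebra is projective in $\mathsf V$ iff it is a retract of a free algebra; exact if isomorphic to a finitely generated subalgebra of a finitely generated free algebra of $\mathsf V$. An algebraic e-generalization problem is a homomorphism $h:\mathbf F_{\mathsf V}(z)\to\prod_{k=1}^m\mathbf E_k$ with each $\mathbf E_k$ 1-generated exact and each $p_k\circ h$ surjective. A solution of $h$ is a homomorphism $g:\mathbf F_{\mathsf V}(z)\to\mathbf P$, $\mathbf P$ finitely generated projective, with $f\circ g=h$ for some homomorphism $f$. For homomorphisms with common domain, $g\sqsubseteq g'$ iff $f\circ g'=g$ for some homomorphism $f$; $(\mathscr A(h),\sqsubseteq)$ is the poset of solutions modulo $\sqsubseteq$-equivalence. The type of $h$ is unitary if $(\mathscr A(h),\sqsubseteq)$ has a minimal complete set (pairwise incomparable elements such that every element lies above one of them) of cardinality 1. *)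

From mathcomp Require Import all_boot.

Set Implicit Arguments.
Unset Strict Implicit.
Unset Printing Implicit Defensive.

Record signature := Signature { op :> Type; arity : op -> nat }.

Record algebra (S : signature) := Algebra {
  carrier :> Type;
  interp : forall o : S, ('I_(arity o) -> carrier) -> carrier }.
Arguments interp {S a} o _.

Definition is_hom (S : signature) (A B : algebra S) (f : A -> B) : Prop :=
  forall (o : S) (args : 'I_(arity o) -> A),
    f (interp o args) = interp o (fun i => f (args i)).

Inductive term (S : signature) (X : Type) : Type :=
| Var : X -> term S X
| App : forall o : S, ('I_(arity o) -> term S X) -> term S X.
Arguments Var {S X} x.
Arguments App {S X} o ts.

Fixpoint eval (S : signature) (X : Type) (A : algebra S) (v : X -> A)
    (t : term S X) : A :=
  match t with
  | Var x => v x
  | App o ts => interp o (fun i => eval v (ts i))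
  end.

(* A variety is the class of models of a set of identities (Birkhoff). *)
Record variety (S : signature) := Variety {
  identities : term S nat -> term S nat -> Prop }.

Definition in_V (S : signature) (V : variety S) (A : algebra S) : Prop :=
  forall s t, identities V s t -> forall v : nat -> A, eval v s = eval v t.

Definition subuniverse (S : signature) (A : algebra S) (P : A -> Prop) : Prop :=
  forall (o : S) (args : 'I_(arity o) -> A),
    (forall i, P (args i)) -> P (interp o args).

Definition generates (S : signature) (A : algebra S) (G : A -> Prop) : Prop :=
  forall P : A -> Prop, subuniverse P -> (forall x, G x -> P x) -> forall a, P a.

Definition fin_gen (S : signature) (A : algebra S) : Prop :=
  exists (n : nat) (gen : 'I_n -> A), generates (fun x => exists i, gen i = x).

Definition one_gen (S : signature) (A : algebra S) : Prop :=
  exists a : A, generates (fun x => x = a).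

Definition free_on (S : signature) (V : variety S) (X : Type)
    (F : algebra S) (eta : X -> F) : Prop :=
  in_V V F /\
  forall A : algebra S, in_V V A ->
    forall f : X -> A,
      (exists g : F -> A, is_hom g /\ forall x, g (eta x) = f x) /\
      (forall g1 g2 : F -> A, is_hom g1 -> is_hom g2 ->
         (forall x, g1 (eta x) = g2 (eta x)) -> forall a, g1 a = g2 a).

Definition projective (S : signature) (V : variety S) (P : algebra S) : Prop :=
  exists (X : Type) (F : algebra S) (eta : X -> F),
    free_on V eta /\
    exists (i : P -> F) (r : F -> P),
      is_hom i /\ is_hom r /\ forall p, r (i p) = p.

(* E is isomorphic to a finitely generated subalgebra of a finitely generated
   free algebra of V, i.e. E is finitely generated and embeds (injective
   homomorphism) into a free algebra of V over a finite set. *)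
Definition exact (S : signature) (V : variety S) (E : algebra S) : Prop :=
  exists (n : nat) (F : algebra S) (eta : 'I_n -> F),
    free_on V eta /\ fin_gen E /\
    exists e : E -> F, is_hom e /\ injective e.

Definition prod_alg (S : signature) (m : nat) (E : 'I_m -> algebra S)
  : algebra S :=
  @Algebra S (forall k : 'I_m, E k)
    (fun o args => fun k => interp o (fun i => args i k)).

Definition proj (S : signature) (m : nat) (E : 'I_m -> algebra S) (k : 'I_m)
  (x : prod_alg E) : E k := x k.

(* F together with z is F_V(z); h : F_V(z) -> prod_k E_k *)
Definition e_gen_problem (S : signature) (V : variety S) (F : algebra S)
    (m : nat) (E : 'I_m -> algebra S) (h : F -> prod_alg E) : Prop :=
  is_hom h /\
  (forall k, one_gen (E k) /\ exact V (E k)) /\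
  (forall k (y : E k), exists x : F, proj k (h x) = y).

Definition is_solution (S : signature) (V : variety S) (F : algebra S)
    (m : nat) (E : 'I_m -> algebra S) (h : F -> prod_alg E)
    (P : algebra S) (g : F -> P) : Prop :=
  is_hom g /\ fin_gen P /\ projective V P /\
  exists f : P -> prod_alg E, is_hom f /\ forall x, f (g x) = h x.

Record solution (S : signature) (V : variety S) (F : algebra S)
    (m : nat) (E : 'I_m -> algebra S) (h : F -> prod_alg E) := Solution {
  sol_alg : algebra S;
  sol_map : F -> sol_alg;
  sol_ok : is_solution V h sol_map }.

Definition hom_le (S : signature) (F A B : algebra S) (g : F -> A) (g' : F -> B)
  : Prop :=
  exists f : B -> A, is_hom f /\ forall x, f (g' x) = g x.

Definition sol_le (S : signature) (V : variety S) (F : algebra S)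
    (m : nat) (E : 'I_m -> algebra S) (h : F -> prod_alg E)
    (s s' : solution V h) : Prop :=
  hom_le (sol_map s) (sol_map s').

(* A minimal complete set of (A(h), ⊑), given by a set of representatives
   (elements of the poset are ⊑-equivalence classes of solutions):
   its classes are pairwise incomparable, and every solution lies above one. *)
Definition minimal_complete_set (S : signature) (V : variety S) (F : algebra S)
    (m : nat) (E : 'I_m -> algebra S) (h : F -> prod_alg E)
    (M : solution V h -> Prop) : Prop :=
  (forall s s', M s -> M s' -> sol_le s s' -> sol_le s' s) /\
  (forall g : solution V h, exists2 s, M s & sol_le s g).

(* M represents exactly one ⊑-equivalence class *)
Definition card_one_classes (S : signature) (V : variety S) (F : algebra S)
    (m : nat) (E : 'I_m -> algebra S) (h : F -> prod_alg E)
    (M : solution V h -> Prop) : Prop :=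
  exists2 s, M s & forall s', M s' -> sol_le s s' /\ sol_le s' s.

Definition unitary (S : signature) (V : variety S) (F : algebra S)
    (m : nat) (E : 'I_m -> algebra S) (h : F -> prod_alg E) : Prop :=
  exists M : solution V h -> Prop,
    minimal_complete_set M /\ card_one_classes M.

Definition is_minimum (S : signature) (V : variety S) (F : algebra S)
    (m : nat) (E : 'I_m -> algebra S) (h : F -> prod_alg E) : Prop :=
  is_solution V h h /\ forall g : solution V h, hom_le h (sol_map g).

(* When the codomain of h is finitely generated and projective, h is itself a
   solution of h (with f the identity).  Every solution g comes with some f
   such that f o g = h, which says exactly that h ⊑ g.  Hence the class of h is
   the least element of (A(h), ⊑), and that class alone is a minimal complete
   set. *)
From mathcomp Require Import all_boot.

Set Implicit Arguments.
Unset Strict Implicit.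
Unset Printing Implicit Defensive.

Lemma hom_le_refl (S : signature) (F A : algebra S) (g : F -> A) : hom_le g g.
Proof. by exists id. Qed.

Section Solutions.

Variables (S : signature) (V : variety S) (F : algebra S).
Variables (m : nat) (E : 'I_m -> algebra S) (h : F -> prod_alg E).

Lemma sol_le_refl (s : solution V h) : sol_le s s.
Proof. exact: hom_le_refl. Qed.

Lemma hom_le_sol_map (s : solution V h) : hom_le h (sol_map s).
Proof. by case: s => P g /= [_ [_ [_ [f [f_hom fgE]]]]]; exists f. Qed.

Lemma is_solution_self :
  is_hom h -> fin_gen (prod_alg E) -> projective V (prod_alg E) ->
  is_solution V h h.
Proof. by move=> h_hom fgE projE; do 3!split => //; exists id. Qed.

Lemma unitary_of_least (s0 : solution V h) :
  (forall s, sol_le s0 s) -> unitary V h.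
Proof.
move=> s0_least; exists (eq^~ s0); split.
- split; first by move=> s s' -> ->.
  by move=> s; exists s0.
- by exists s0 => // s' ->; split; apply: sol_le_refl.
Qed.

End Solutions.

Theorem theorem4p24 (S : signature) (V : variety S)
    (F : algebra S) (z : F) (hF : free_on V (fun _ : unit => z))
    (m : nat) (E : 'I_m -> algebra S) (h : F -> prod_alg E)
    (hprob : e_gen_problem V h)
    (hfg : fin_gen (prod_alg E)) (hproj : projective V (prod_alg E)) :
  unitary V h /\ is_minimum V h.
Proof.
have h_sol : is_solution V h h.
  by case: hprob => h_hom _; exact: is_solution_self.
split; last by split => //; exact: hom_le_sol_map.
apply: (unitary_of_least (s0 := Solution h_sol)) => s.
exact: hom_le_sol_map.
Qed.
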